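(* If a path $\omega\in\Omega$ is wCH-random for a computable temporal forecasting system $\varphi$, then $\min I_\textnormal{wCH}(\omega)\le\liminf_{n\to\infty}\overline{\varphi}(\omega_{1:n})$ and $\limsup_{n\to\infty}\underline{\varphi}(\omega_{1:n})\le\max I_\textnormal{wCH}(\omega)$.
   Context: $\mathcal{X}=\{0,1\}$; $\Omega=\mathcal{X}^{\mathbb{N}}$ (paths); $\mathbb{S}=\bigcup_{n\ge0}\mathcal X^n$ (situations), $|s|$ length, $\omega_{1:n}=(\omega_1,\dots,\omega_n)$, $\omega_{1:0}$ the empty string. $\mathcal{I}$: nonempty closed intervals $I\subseteq[0,1]$. A forecasting system is $\varphi:\mathbb S\to\mathcal I$, $\underline\varphi=\min\varphi$, $\overline\varphi=\max\varphi$; temporal if $\varphi(s)=\varphi(t)$ whenever $|s|=|t|$; an interval forecast $I$ is identified with the constant forecasting system $s\mapsto I$. $\varphi$ is computable if there are recursive $\underline q,\overline q:\mathbb S\times\mathbb N_0\to\mathbb Q$ with $|\underline\varphi(s)-\underline q(s,n)|<2^{-n}$ and $|\overline\varphi(s)-\overline q(s,n)|<2^{-n}$. A path $\omega$ is wCH-random for $\varphi$ if for every recursive temporal selection process $S:\mathbb S\to\{0,1\}$ (i.e. $S(s)$ depends only on $|s|$) with $\sum_{k=0}^{n-1}S(\omega_{1:k})\to\infty$: $\liminf_n \frac{\sum_{k<n}S(\omega_{1:k})[\omega_{k+1}-\underline\varphi(\omega_{1:k})]}{\sum_{k<n}S(\omega_{1:k})}\ge0$ and $\limsup_n \frac{\sum_{k<n}S(\omega_{1:k})[\omega_{k+1}-\overline\varphi(\omega_{1:k})]}{\sum_{k<n}S(\omega_{1:k})}\le0$.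 $\mathcal I_\textnormal{wCH}(\omega)=\{I\in\mathcal I:\omega\text{ wCH-random for }I\}$, $I_\textnormal{wCH}(\omega)=\bigcap_{I\in\mathcal I_\textnormal{wCH}(\omega)}I$. *)

From Stdlib Require Import Reals Lra List.
From Coquelicot Require Import Coquelicot.
Import ListNotations.
Open Scope R_scope.

Inductive rcode : Type :=
| RZero : rcode
| RSucc : rcode
| RProj : nat -> rcode
| RComp : rcode -> list rcode -> rcode
| RPrec : rcode -> rcode -> rcode
| RMu   : rcode -> rcode.

Inductive reval : rcode -> list nat -> nat -> Prop :=
| rev_zero xs : reval RZero xs 0
| rev_succ x xs : reval RSucc (x :: xs) (S x)
| rev_proj i xs : (i < length xs)%nat -> reval (RProj i) xs (nth i xs 0%nat)
| rev_comp f gs xs ys z :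
    Forall2 (fun g y => reval g xs y) gs ys ->
    reval f ys z -> reval (RComp f gs) xs z
| rev_prec0 f g xs y : reval f xs y -> reval (RPrec f g) (0%nat :: xs) y
| rev_precS f g n xs y z :
    reval (RPrec f g) (n :: xs) y -> reval g (n :: y :: xs) z ->
    reval (RPrec f g) (S n :: xs) z
| rev_mu f xs n :
    reval f (n :: xs) 0 ->
    (forall m, (m < n)%nat -> exists k, reval f (m :: xs) (S k)) ->
    reval (RMu f) xs n.

Definition recursive1 (f : nat -> nat) : Prop :=
  exists c, forall x, reval c [x] (f x).
Definition recursive2 (f : nat -> nat -> nat) : Prop :=
  exists c, forall x y, reval c [x; y] (f x y).

(* situations: finite binary strings; true = 1, false = 0 *)
Definition sit := list bool.

Fixpoint enc (s : sit) : nat :=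
  match s with
  | [] => 0%nat
  | b :: t => (2 * enc t + 1 + (if b then 1 else 0))%nat
  end.

Definition b2R (b : bool) : R := if b then 1 else 0.

(* paths omega = (omega_1, omega_2, ...) represented 0-based:
   omega_{k+1} is [w k]. *)
Definition path := nat -> bool.

Definition prefix (w : path) (n : nat) : sit := map w (seq 0 n).

Record interval := mkInterval {
  imin : R; imax : R;
  imin_ge0 : 0 <= imin; imin_le_imax : imin <= imax; imax_le1 : imax <= 1 }.

Definition in_interval (I : interval) (x : R) : Prop := imin I <= x <= imax I.

Definition forecasting_system := sit -> interval.
Definition lower (phi : forecasting_system) (s : sit) : R := imin (phi s).
Definition upper (phi : forecasting_system) (s : sit) : R := imax (phi s).

Definition temporal (phi : forecasting_system) : Prop :=
  forall s t : sit, length s = length t -> phi s = phi t.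

Definition const_fs (I : interval) : forecasting_system := fun _ => I.

Definition rat_of (a b d : nat) : R := (INR a - INR b) / (INR d + 1).

Definition computable_fs (phi : forecasting_system) : Prop :=
  exists a1 b1 d1 a2 b2 d2 : nat -> nat -> nat,
    recursive2 a1 /\ recursive2 b1 /\ recursive2 d1 /\
    recursive2 a2 /\ recursive2 b2 /\ recursive2 d2 /\
    forall (s : sit) (n : nat),
      Rabs (lower phi s - rat_of (a1 (enc s) n) (b1 (enc s) n) (d1 (enc s) n))
        < / 2 ^ n /\
      Rabs (upper phi s - rat_of (a2 (enc s) n) (b2 (enc s) n) (d2 (enc s) n))
        < / 2 ^ n.

Definition selection := sit -> bool.

Definition temporal_sel (S : selection) : Prop :=
  forall s t : sit, length s = length t -> S s = S t.

Definition recursive_sel (S : selection) : Prop :=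
  exists c, forall s, reval c [enc s] (if S s then 1%nat else 0%nat).

Fixpoint psum (f : nat -> R) (n : nat) : R :=
  match n with O => 0 | S m => psum f m + f m end.

Definition wCH_random (phi : forecasting_system) (w : path) : Prop :=
  forall S : selection,
    temporal_sel S -> recursive_sel S ->
    is_lim_seq (fun n => psum (fun k => b2R (S (prefix w k))) n) p_infty ->
    Rbar_le (Finite 0)
      (LimInf_seq (fun n =>
         psum (fun k => b2R (S (prefix w k)) * (b2R (w k) - lower phi (prefix w k))) n
         / psum (fun k => b2R (S (prefix w k))) n)) /\
    Rbar_le
      (LimSup_seq (fun n =>
         psum (fun k => b2R (S (prefix w k)) * (b2R (w k) - upper phi (prefix w k))) n
         / psum (fun k => b2R (S (prefix w k))) n)) (Finite 0).

Definition IwCH (w : path) : R -> Prop :=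
  fun x => forall I : interval, wCH_random (const_fs I) w -> in_interval I x.

Definition is_min_of (A : R -> Prop) (m : R) : Prop :=
  A m /\ forall x, A x -> m <= x.
Definition is_max_of (A : R -> Prop) (m : R) : Prop :=
  A m /\ forall x, A x -> x <= m.

(* The intervals I for which w is wCH-random pairwise overlap (test them with the
   selection that picks every round), so I_wCH(w) is the closed interval
   [sup min I, inf max I].  Suppose the upper forecasts dropped below some r < min I
   infinitely often, for a random I.  Choose a rational q with margin 2^-N strictly
   between r and min I; comparing the computable approximations of the upper forecast
   with q gives a recursive temporal selection that picks all those rounds and only
   rounds where the upper forecast is below q + 2^-N.  Along it, randomness for phi
   keeps the average outcome asymptotically below q + 2^-N, randomness for I keeps it
   above min I, a contradiction.  The lim sup of the lower forecasts is handled
   symmetrically with the complementary selection. *)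

From Stdlib Require Import Reals List Lra Lia Classical.
From Coquelicot Require Import Coquelicot.
Import ListNotations.

Local Open Scope nat_scope.

Lemma reval_comp1 f g xs y z :
  reval g xs y -> reval f [y] z -> reval (RComp f [g]) xs z.
Proof. intros Hg Hf. apply (rev_comp _ _ _ [y]); auto. Qed.

Lemma reval_comp2 f g1 g2 xs y1 y2 z :
  reval g1 xs y1 -> reval g2 xs y2 -> reval f [y1; y2] z ->
  reval (RComp f [g1; g2]) xs z.
Proof. intros Hg1 Hg2 Hf. apply (rev_comp _ _ _ [y1; y2]); auto. Qed.

Lemma reval_proj0 x xs : reval (RProj 0) (x :: xs) x.
Proof. apply (rev_proj 0 (x :: xs)); simpl; lia. Qed.

Lemma reval_proj1 x y xs : reval (RProj 1) (x :: y :: xs) y.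
Proof. apply (rev_proj 1 (x :: y :: xs)); simpl; lia. Qed.

Lemma reval_prec f g xs (F : nat -> nat) :
  reval f xs (F 0) -> (forall k, reval g (k :: F k :: xs) (F (S k))) ->
  forall n, reval (RPrec f g) (n :: xs) (F n).
Proof. intros Hf Hg n; induction n; [constructor | eapply rev_precS]; eauto. Qed.

Fixpoint const_code (k : nat) : rcode :=
  match k with O => RZero | S j => RComp RSucc [const_code j] end.

Lemma reval_const_code k xs : reval (const_code k) xs k.
Proof. induction k; simpl; [constructor | eapply reval_comp1; eauto; constructor]. Qed.

Lemma recursive1_const k : recursive1 (fun _ => k).
Proof. exists (const_code k); intros; apply reval_const_code. Qed.

Lemma recursive1_succ : recursive1 S.
Proof. exists RSucc; constructor. Qed.

Lemma recursive2_fst : recursive2 (fun x _ => x).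
Proof. exists (RProj 0); intros; apply reval_proj0. Qed.

Lemma recursive2_snd : recursive2 (fun _ y => y).
Proof. exists (RProj 1); intros; apply reval_proj1. Qed.

Lemma recursive2_ext f g :
  recursive2 f -> (forall x y, f x y = g x y) -> recursive2 g.
Proof. intros [c Hc] E; exists c; intros x y; rewrite <- E; apply Hc. Qed.

Lemma recursive1_comp (h : nat -> nat -> nat) f g :
  recursive2 h -> recursive1 f -> recursive1 g -> recursive1 (fun x => h (f x) (g x)).
Proof.
  intros [ch Hh] [cf Hf] [cg Hg]; exists (RComp ch [cf; cg]); intro x.
  eapply reval_comp2; eauto.
Qed.

Lemma recursive1_comp1 (h : nat -> nat) f :
  recursive1 h -> recursive1 f -> recursive1 (fun x => h (f x)).
Proof.
  intros [ch Hh] [cf Hf]; exists (RComp ch [cf]); intro x.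
  eapply reval_comp1; eauto.
Qed.

Lemma recursive2_comp (h : nat -> nat -> nat) f g :
  recursive2 h -> recursive2 f -> recursive2 g ->
  recursive2 (fun x y => h (f x y) (g x y)).
Proof.
  intros [ch Hh] [cf Hf] [cg Hg]; exists (RComp ch [cf; cg]); intros x y.
  eapply reval_comp2; eauto.
Qed.

Lemma recursive2_comp1 (h : nat -> nat) f :
  recursive1 h -> recursive2 f -> recursive2 (fun x y => h (f x y)).
Proof.
  intros [ch Hh] [cf Hf]; exists (RComp ch [cf]); intros x y.
  eapply reval_comp1; eauto.
Qed.

Lemma recursive1_rec (F : nat -> nat) (g : nat -> nat -> nat) :
  recursive2 g -> (forall k, F (S k) = g k (F k)) -> recursive1 F.
Proof.
  intros [cg Hg] HF; exists (RPrec (const_code (F 0)) cg); intro x.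
  apply reval_prec; [apply reval_const_code | intro k; rewrite HF; apply Hg].
Qed.

Lemma recursive2_add : recursive2 Nat.add.
Proof.
  exists (RPrec (RProj 0) (RComp RSucc [RProj 1])); intros x y.
  apply (reval_prec _ _ [y] (fun n => n + y)); [apply reval_proj0|].
  intro k; eapply reval_comp1; [apply reval_proj1 | constructor].
Qed.

Lemma recursive2_mul : recursive2 Nat.mul.
Proof.
  destruct recursive2_add as [cadd Hadd].
  exists (RPrec RZero (RComp cadd [RProj 2; RProj 1])); intros x y.
  apply (reval_prec _ _ [y] (fun n => n * y)); [constructor|].
  intro k; eapply reval_comp2; [| apply reval_proj1 | apply Hadd].
  apply (rev_proj 2 (k :: k * y :: [y])); simpl; lia.
Qed.

Lemma recursive1_pred : recursive1 Nat.pred.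
Proof.
  exists (RPrec RZero (RProj 0)); intro x.
  apply (reval_prec _ _ [] Nat.pred); [constructor | intro; apply reval_proj0].
Qed.

Lemma recursive2_sub : recursive2 Nat.sub.
Proof.
  destruct recursive1_pred as [cpred Hpred].
  assert (Hrev : recursive2 (fun x y => y - x)).
  { exists (RPrec (RProj 0) (RComp cpred [RProj 1])); intros x y.
    apply (reval_prec _ _ [y] (fun n => y - n)); [rewrite Nat.sub_0_r; apply reval_proj0|].
    intro k; eapply reval_comp1; [apply reval_proj1|].
    replace (y - S k) with (Nat.pred (y - k)) by lia; apply Hpred. }
  exact (recursive2_comp _ _ _ Hrev recursive2_snd recursive2_fst).
Qed.

Lemma recursive2_const k : recursive2 (fun _ _ => k).
Proof. exact (recursive2_comp1 _ _ (recursive1_const k) recursive2_fst). Qed.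

Ltac recursive_tac :=
  repeat first
    [ assumption
    | exact recursive2_add | exact recursive2_mul | exact recursive2_sub
    | exact recursive1_succ
    | match goal with
      | |- recursive1 (fun _ => ?k) => exact (recursive1_const k)
      | |- recursive2 (fun _ _ => ?k) => exact (recursive2_const k)
      | |- recursive2 (fun x _ => x) => exact recursive2_fst
      | |- recursive2 (fun _ y => y) => exact recursive2_snd
      | |- recursive1 (fun x => ?h (@?f x) (@?g x)) => apply (recursive1_comp h f g)
      | |- recursive1 (fun x => ?h (@?f x)) => apply (recursive1_comp1 h f)
      | |- recursive2 (fun x y => ?h (@?f x y) (@?g x y)) => apply (recursive2_comp h f g)
      | |- recursive2 (fun x y => ?h (@?f x y)) => apply (recursive2_comp1 h f)
      end ].

Definition nat_ltb (x y : nat) : nat := Nat.b2n (x <? y).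

Lemma recursive2_ltb : recursive2 nat_ltb.
Proof.
  assert (Hsgn : recursive1 (fun n => Nat.b2n (0 <? n))).
  { apply (recursive1_rec _ (fun _ _ => 1)); [recursive_tac | reflexivity]. }
  apply (recursive2_ext (fun x y => Nat.b2n (0 <? y - x))).
  { apply (recursive2_comp1 (fun n => Nat.b2n (0 <? n)) (fun x y => y - x)); recursive_tac. }
  intros x y; unfold nat_ltb.
  destruct (Nat.ltb_spec 0 (y - x)), (Nat.ltb_spec x y); cbn [Nat.b2n]; lia.
Qed.

(* A temporal selection may only look at the length of the situation, while the
   approximations of phi are indexed by its code; [zeros_code] maps the code of any
   situation to the code 2^n - 1 of the all-zero situation of the same length n. *)
Definition zeros_step (k c : nat) : nat := if c + c <? S k then S k else c.

Fixpoint zeros_code (x : nat) : nat :=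
  match x with O => O | S k => zeros_step k (zeros_code k) end.

Lemma recursive1_zeros_code : recursive1 zeros_code.
Proof.
  apply (recursive1_rec _ zeros_step); [|reflexivity].
  apply (recursive2_ext (fun k c => c + nat_ltb (c + c) (S k) * (S k - c)));
    [pose proof recursive2_ltb; recursive_tac|].
  intros k c; unfold zeros_step, nat_ltb.
  destruct (Nat.ltb_spec (c + c) (S k)); cbn [Nat.b2n]; lia.
Qed.

Lemma zeros_code_spec x n : 2 ^ n <= S x < 2 ^ S n -> zeros_code x = 2 ^ n - 1.
Proof.
  revert n; induction x as [|x IH]; intros n Hn;
    rewrite Nat.pow_succ_r' in Hn; pose proof (Nat.pow_nonzero 2 n ltac:(lia)).
  - destruct n as [|n]; [reflexivity|].
    rewrite Nat.pow_succ_r' in Hn; lia.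
  - cbn [zeros_code]; unfold zeros_step.
    destruct (Nat.eq_dec (S (S x)) (2 ^ n)) as [E|E].
    + destruct n as [|n]; [simpl in E; lia|].
      rewrite Nat.pow_succ_r' in *.
      rewrite (IH n) by (rewrite Nat.pow_succ_r'; lia).
      destruct (Nat.ltb_spec (2 ^ n - 1 + (2 ^ n - 1)) (S x)); lia.
    + rewrite (IH n) by (rewrite Nat.pow_succ_r'; lia).
      destruct (Nat.ltb_spec (2 ^ n - 1 + (2 ^ n - 1)) (S x)); lia.
Qed.

Lemma enc_bounds s : 2 ^ length s <= S (enc s) < 2 ^ S (length s).
Proof. induction s as [|[|] s IH]; simpl in *; lia. Qed.

Lemma enc_repeat_false n : enc (repeat false n) = 2 ^ n - 1.
Proof.
  induction n as [|n IH]; simpl; [reflexivity|].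
  pose proof (Nat.pow_nonzero 2 n ltac:(lia)); lia.
Qed.

Lemma zeros_code_enc s : zeros_code (enc s) = enc (repeat false (length s)).
Proof. rewrite enc_repeat_false; apply zeros_code_spec, enc_bounds. Qed.

Lemma recursive_sel_of (S : selection) (g : nat -> nat) :
  recursive1 g -> (forall s, g (enc s) = Nat.b2n (S s)) -> recursive_sel S.
Proof.
  intros [c Hc] E; exists c; intro s.
  specialize (Hc (enc s)); rewrite E in Hc; exact Hc.
Qed.

Lemma negb_selection (S : selection) :
  temporal_sel S -> recursive_sel S ->
  temporal_sel (fun s => negb (S s)) /\ recursive_sel (fun s => negb (S s)).
Proof.
  intros HS [c Hc]; split.
  - intros s t E; rewrite (HS s t E); reflexivity.
  - destruct recursive2_sub as [csub Hsub].
    exists (RComp csub [const_code 1; c]); intro s.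
    eapply reval_comp2; [apply reval_const_code | apply Hc |].
    destruct (S s); apply Hsub.
Qed.

Lemma true_selection : temporal_sel (fun _ => true) /\ recursive_sel (fun _ => true).
Proof.
  split; [intros s t _; reflexivity|].
  apply (recursive_sel_of _ (fun _ => 1)); [apply recursive1_const | reflexivity].
Qed.

Local Open Scope R_scope.

Lemma rat_of_lt_iff a b d p K : (0 < K)%nat ->
  (a * K <? p * S d + b * K)%nat = true <-> rat_of a b d < INR p / INR K.
Proof.
  intros HK; rewrite Nat.ltb_lt; unfold rat_of.
  assert (HK' : 0 < INR K) by (apply lt_0_INR; lia).
  assert (Hd : 0 < INR d + 1) by (pose proof (pos_INR d); lra).
  rewrite Rlt_div_l by lra.
  replace (INR p / INR K * (INR d + 1)) with (INR p * (INR d + 1) / INR K) by (field; lra).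
  rewrite <- Rlt_div_r by lra.
  split; intro H.
  - apply lt_INR in H; rewrite plus_INR, !mult_INR, S_INR in H; lra.
  - apply INR_lt; rewrite plus_INR, !mult_INR, S_INR; lra.
Qed.

Definition approximable (f : sit -> R) : Prop :=
  exists a b d, recursive2 a /\ recursive2 b /\ recursive2 d /\
    forall s n, Rabs (f s - rat_of (a (enc s) n) (b (enc s) n) (d (enc s) n)) < / 2 ^ n.

Definition length_invariant (f : sit -> R) : Prop :=
  forall s t, length s = length t -> f s = f t.

Lemma threshold_selection (f : sit -> R) (N p K : nat) :
  (0 < K)%nat -> approximable f -> length_invariant f ->
  exists S : selection, temporal_sel S /\ recursive_sel S /\
    forall s, (S s = true -> f s < INR p / INR K + / 2 ^ N) /\
              (S s = false -> INR p / INR K - / 2 ^ N < f s).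
Proof.
  intros HK (a & b & d & Ha & Hb & Hd & Happrox) Hf.
  exists (fun s => let e := zeros_code (enc s) in
            (a e N * K <? p * S (d e N) + b e N * K)%nat).
  split; [|split].
  - intros s t E; cbv zeta; rewrite !zeros_code_enc, E; reflexivity.
  - apply (recursive_sel_of _ (fun x => let e := zeros_code x in
             nat_ltb (a e N * K) (p * S (d e N) + b e N * K))); [|reflexivity].
    pose proof recursive1_zeros_code; pose proof recursive2_ltb; cbv zeta; recursive_tac.
  - intro s; cbv zeta; rewrite zeros_code_enc.
    set (t := repeat false (length s)).
    rewrite (Hf s t) by (unfold t; rewrite repeat_length; reflexivity).
    specialize (Happrox t N); apply Rabs_def2 in Happrox.
    pose proof (rat_of_lt_iff (a (enc t) N) (b (enc t) N) (d (enc t) N) p K HK) as Hcmp.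
    destruct (_ <? _)%nat; split; intro HS; try discriminate.
    + pose proof (proj1 Hcmp eq_refl); lra.
    + assert (~ rat_of (a (enc t) N) (b (enc t) N) (d (enc t) N) < INR p / INR K)
        by (rewrite <- Hcmp; discriminate).
      lra.
Qed.

Lemma approximable_lower phi : computable_fs phi -> approximable (lower phi).
Proof.
  intros (a & b & d & a' & b' & d' & Ha & Hb & Hd & _ & _ & _ & H).
  exists a, b, d; repeat split; auto; apply H.
Qed.

Lemma approximable_upper phi : computable_fs phi -> approximable (upper phi).
Proof.
  intros (a' & b' & d' & a & b & d & _ & _ & _ & Ha & Hb & Hd & H).
  exists a, b, d; repeat split; auto; apply H.
Qed.

Lemma length_invariant_lower phi : temporal phi -> length_invariant (lower phi).
Proof. intros Ht s t E; unfold lower; rewrite (Ht s t E); reflexivity. Qed.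

Lemma length_invariant_upper phi : temporal phi -> length_invariant (upper phi).
Proof. intros Ht s t E; unfold upper; rewrite (Ht s t E); reflexivity. Qed.

Lemma psum_le f g n : (forall k, f k <= g k) -> psum f n <= psum g n.
Proof. intros H; induction n; simpl; [lra | specialize (H n); lra]. Qed.

Lemma psum_nonneg f n : (forall k, 0 <= f k) -> 0 <= psum f n.
Proof. intros H; induction n; simpl; [lra | specialize (H n); lra]. Qed.

Lemma psum_nonpos f n : (forall k, f k <= 0) -> psum f n <= 0.
Proof. intros H; induction n; simpl; [lra | specialize (H n); lra]. Qed.

Lemma psum_mono f m n : (forall k, 0 <= f k) -> (m <= n)%nat -> psum f m <= psum f n.
Proof. intros H Hmn; induction Hmn; simpl; [lra | specialize (H m0); lra]. Qed.

Lemma psum_diverges (s : nat -> R) :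
  (forall k, 0 <= s k) -> (forall N, exists n, (N <= n)%nat /\ 1 <= s n) ->
  is_lim_seq (psum s) p_infty.
Proof.
  intros Hs Hoften; apply is_lim_seq_spec; intro M.
  assert (Hgrow : forall j : nat, exists N, INR j <= psum s N).
  { induction j as [|j [N HN]]; [exists 0%nat; simpl; lra|].
    destruct (Hoften N) as [n [Hn Hsn]]; exists (S n).
    rewrite S_INR; simpl; pose proof (psum_mono s N n Hs Hn); lra. }
  destruct (INR_unbounded M) as [j Hj]; destruct (Hgrow j) as [N HN].
  exists N; intros n Hn; pose proof (psum_mono s N n Hs Hn); lra.
Qed.

Lemma LimInf_seq_ge0_eventually u (eps : R) :
  Rbar_le 0 (LimInf_seq u) -> 0 < eps -> exists N, forall n, (N <= n)%nat -> - eps < u n.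
Proof.
  intros Hu Heps; destruct (ex_LimInf_seq u) as [l Hl].
  rewrite (is_LimInf_seq_unique _ _ Hl) in Hu; destruct l as [l| |]; simpl in Hu, Hl.
  - destruct (Hl (mkposreal eps Heps)) as [_ [N HN]]; exists N; intros n Hn.
    specialize (HN n Hn); simpl in HN; lra.
  - destruct (Hl (- eps)) as [N HN]; exists N; exact HN.
  - contradiction.
Qed.

Lemma LimSup_seq_le0_eventually u (eps : R) :
  Rbar_le (LimSup_seq u) 0 -> 0 < eps -> exists N, forall n, (N <= n)%nat -> u n < eps.
Proof.
  intros Hu Heps.
  assert (Hopp : Rbar_le 0 (LimInf_seq (fun n => - u n))).
  { rewrite LimInf_seq_opp.
    replace (Finite 0) with (Rbar_opp (Finite 0)) by (simpl; rewrite Ropp_0; reflexivity).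
    apply Rbar_opp_le; exact Hu. }
  destruct (LimInf_seq_ge0_eventually _ _ Hopp Heps) as [N HN].
  exists N; intros n Hn; specialize (HN n Hn); lra.
Qed.

Lemma LimInf_seq_lt_frequently u (m : R) :
  ~ Rbar_le m (LimInf_seq u) -> exists r, r < m /\ forall N, exists n, (N <= n)%nat /\ u n < r.
Proof.
  intros Hu; destruct (ex_LimInf_seq u) as [l Hl].
  rewrite (is_LimInf_seq_unique _ _ Hl) in Hu; destruct l as [l| |]; simpl in Hu, Hl.
  - assert (Hlt : l < m) by (apply Rnot_le_lt; exact Hu).
    assert (Heps : 0 < (m - l) / 2) by lra.
    exists (l + (m - l) / 2); split; [lra|].
    intro N; exact (proj1 (Hl (mkposreal _ Heps)) N).
  - contradiction Hu; exact I.
  - exists (m - 1); split; [lra | exact (Hl (m - 1))].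
Qed.

Lemma LimSup_seq_gt_frequently u (M : R) :
  ~ Rbar_le (LimSup_seq u) M -> exists r, M < r /\ forall N, exists n, (N <= n)%nat /\ r < u n.
Proof.
  intros Hu.
  assert (Hopp : ~ Rbar_le (- M) (LimInf_seq (fun n => - u n))).
  { rewrite LimInf_seq_opp; intro H; apply Hu, Rbar_opp_le, H. }
  destruct (LimInf_seq_lt_frequently _ _ Hopp) as [r [Hr Hfreq]].
  exists (- r); split; [lra|].
  intro N; destruct (Hfreq N) as [n [Hn Hun]]; exists n; split; [exact Hn | lra].
Qed.

Lemma le_of_weighted_averages (s x a b : nat -> R) (al be : R) :
  (forall k, 0 <= s k) -> is_lim_seq (psum s) p_infty ->
  (forall k, s k * al <= s k * a k) -> (forall k, s k * b k <= s k * be) ->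
  Rbar_le 0 (LimInf_seq (fun n => psum (fun k => s k * (x k - a k)) n / psum s n)) ->
  Rbar_le (LimSup_seq (fun n => psum (fun k => s k * (x k - b k)) n / psum s n)) 0 ->
  al <= be.
Proof.
  intros Hs Hdiv Ha Hb Hinf Hsup; apply Rnot_lt_le; intro Hlt.
  assert (Heps : 0 < (al - be) / 2) by lra.
  destruct (LimInf_seq_ge0_eventually _ _ Hinf Heps) as [N1 H1].
  destruct (LimSup_seq_le0_eventually _ _ Hsup Heps) as [N2 H2].
  destruct (proj2 (is_lim_seq_spec _ _) Hdiv 0) as [N3 H3].
  set (n := (N1 + N2 + N3)%nat).
  specialize (H1 n ltac:(lia)); specialize (H2 n ltac:(lia)); specialize (H3 n ltac:(lia)).
  set (A := psum (fun k => s k * (x k - a k)) n) in H1.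
  set (B := psum (fun k => s k * (x k - b k)) n) in H2.
  set (D := psum s n) in *.
  assert (Hgap : forall m, psum (fun k => s k * (x k - al)) m - psum (fun k => s k * (x k - be)) m
                          = (be - al) * psum s m).
  { induction m as [|m IH]; simpl; [ring | rewrite Rmult_plus_distr_l, <- IH; ring]. }
  assert (HA : A <= psum (fun k => s k * (x k - al)) n)
    by (apply psum_le; intro k; specialize (Ha k); lra).
  assert (HB : psum (fun k => s k * (x k - be)) n <= B)
    by (apply psum_le; intro k; specialize (Hb k); lra).
  specialize (Hgap n); fold D in Hgap.
  assert (Hq : A / D - B / D = (A - B) / D) by (field; lra).
  assert (Hle : (A - B) / D <= be - al) by (apply Rle_div_l; lra).
  lra.
Qed.

Lemma b2R_bounds b : 0 <= b2R b <= 1.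
Proof. destruct b; simpl; lra. Qed.

Definition selected_often (S : selection) (w : path) : Prop :=
  forall N, exists n, (N <= n)%nat /\ S (prefix w n) = true.

Lemma selected_lower_le_upper (phi psi : forecasting_system) (S : selection) (w : path) c d :
  temporal_sel S -> recursive_sel S -> selected_often S w ->
  wCH_random phi w -> wCH_random psi w ->
  (forall k, S (prefix w k) = true -> c <= lower phi (prefix w k)) ->
  (forall k, S (prefix w k) = true -> upper psi (prefix w k) <= d) ->
  c <= d.
Proof.
  intros HSt HSr Hoften Hphi Hpsi Hc Hd.
  set (sel k := b2R (S (prefix w k))).
  assert (Hdiv : is_lim_seq (psum sel) p_infty).
  { apply psum_diverges; [intro k; apply b2R_bounds|].
    intro N; destruct (Hoften N) as [n [Hn HS]]; exists n; split; [exact Hn|].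
    unfold sel; rewrite HS; simpl; lra. }
  apply (le_of_weighted_averages sel (fun k => b2R (w k))
           (fun k => lower phi (prefix w k)) (fun k => upper psi (prefix w k))).
  - intro k; apply b2R_bounds.
  - exact Hdiv.
  - intro k; unfold sel; destruct (S (prefix w k)) eqn:E; simpl; [specialize (Hc k E) | ]; lra.
  - intro k; unfold sel; destruct (S (prefix w k)) eqn:E; simpl; [specialize (Hd k E) | ]; lra.
  - exact (proj1 (Hphi S HSt HSr Hdiv)).
  - exact (proj2 (Hpsi S HSt HSr Hdiv)).
Qed.

Lemma random_intervals_overlap (I J : interval) (w : path) :
  wCH_random (const_fs I) w -> wCH_random (const_fs J) w -> imin I <= imax J.
Proof.
  intros HI HJ; destruct true_selection as [Ht Hr].
  apply (selected_lower_le_upper (const_fs I) (const_fs J) (fun _ => true) w); auto.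
  - intro N; exists N; split; [lia | reflexivity].
  - intros k _; apply Rle_refl.
  - intros k _; apply Rle_refl.
Qed.

Definition unit_interval : interval := mkInterval 0 1 (Rle_refl 0) Rle_0_1 (Rle_refl 1).

(* Also for y = 0, where Rocq's division returns 0. *)
Lemma div_nonneg x y : 0 <= x -> 0 <= y -> 0 <= x / y.
Proof.
  intros Hx Hy; destruct (Req_dec y 0) as [->|Hy0]; [rewrite Rdiv_0_r; lra|].
  apply Rmult_le_pos; [exact Hx | apply Rlt_le, Rinv_0_lt_compat; lra].
Qed.

Lemma unit_interval_random w : wCH_random (const_fs unit_interval) w.
Proof.
  intros S _ _ _; unfold lower, upper, const_fs; split.
  - rewrite <- (LimInf_seq_const 0); apply LimInf_le; exists 0%nat; intros n _.
    apply div_nonneg; apply psum_nonneg; intro k; simpl;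
      pose proof (b2R_bounds (S (prefix w k))); pose proof (b2R_bounds (w k)); nra.
  - rewrite <- (LimSup_seq_const 0); apply LimSup_le; exists 0%nat; intros n _.
    set (A := psum (fun k => b2R (S (prefix w k)) * (b2R (w k) - imax unit_interval)) n).
    assert (HA : A <= 0).
    { apply psum_nonpos; intro k; simpl.
      pose proof (b2R_bounds (S (prefix w k))); pose proof (b2R_bounds (w k)); nra. }
    assert (0 <= - A / psum (fun k => b2R (S (prefix w k))) n)
      by (apply div_nonneg; [lra | apply psum_nonneg; intro k; apply b2R_bounds]).
    unfold Rdiv in *; lra.
Qed.

Definition interval_inter {T : Type} (F : T -> Prop) (lo hi : T -> R) (x : R) : Prop :=
  forall i, F i -> lo i <= x <= hi i.

Lemma interval_inter_min {T : Type} (F : T -> Prop) (lo hi : T -> R) :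
  (exists i, F i) -> (forall i j, F i -> F j -> lo i <= hi j) ->
  exists m, is_min_of (interval_inter F lo hi) m /\
            forall r, r < m -> exists i, F i /\ r < lo i.
Proof.
  intros [i0 Hi0] Hover.
  set (E := fun x => exists i, F i /\ x = lo i).
  assert (HE : bound E) by (exists (hi i0); intros x [i [Hi ->]]; auto).
  destruct (completeness E HE (ex_intro _ (lo i0) (ex_intro _ i0 (conj Hi0 eq_refl))))
    as [m [Hub Hlub]].
  exists m; split; [split|].
  - intros i Hi; split; [apply Hub; exists i; auto|].
    apply Hlub; intros x [j [Hj ->]]; auto.
  - intros x Hx; apply Hlub; intros y [j [Hj ->]]; apply (Hx j Hj).
  - intros r Hr; apply NNPP; intro Hno.
    assert (m <= r); [|lra].
    apply Hlub; intros x [j [Hj ->]]; apply Rnot_lt_le; intro Hlt; apply Hno; eauto.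
Qed.

Lemma interval_inter_max {T : Type} (F : T -> Prop) (lo hi : T -> R) :
  (exists i, F i) -> (forall i j, F i -> F j -> lo i <= hi j) ->
  exists M, is_max_of (interval_inter F lo hi) M /\
            forall r, M < r -> exists i, F i /\ hi i < r.
Proof.
  intros Hne Hover.
  destruct (interval_inter_min F (fun i => - hi i) (fun i => - lo i) Hne)
    as (m & [Hm Hmin] & Happrox); [intros i j Hi Hj; specialize (Hover j i Hj Hi); lra|].
  exists (- m); split; [split|].
  - intros i Hi; specialize (Hm i Hi); lra.
  - intros x Hx; enough (m <= - x) by lra.
    apply Hmin; intros i Hi; specialize (Hx i Hi); lra.
  - intros r Hr; destruct (Happrox (- r)) as (i & Hi & Hlt); [lra|].
    exists i; split; [exact Hi | lra].
Qed.

Lemma Rbar_le_of_approx_below (m : R) (L : Rbar) :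
  (forall r, r < m -> exists y, r < y /\ Rbar_le y L) -> Rbar_le m L.
Proof.
  intros H; destruct L as [l| |]; simpl; auto.
  - apply Rnot_lt_le; intro Hlt; destruct (H l Hlt) as [y [Hy Hyl]]; simpl in Hyl; lra.
  - destruct (H (m - 1)) as [y [_ Hy]]; [lra | exact Hy].
Qed.

Lemma Rbar_le_of_approx_above (M : R) (L : Rbar) :
  (forall r, M < r -> exists y, y < r /\ Rbar_le L y) -> Rbar_le L M.
Proof.
  intros H; destruct L as [l| |]; simpl; auto.
  - apply Rnot_lt_le; intro Hlt; destruct (H l Hlt) as [y [Hy Hyl]]; simpl in Hyl; lra.
  - destruct (H (M + 1)) as [y [_ Hy]]; [lra | exact Hy].
Qed.

Lemma pow2_inv_lt eps : 0 < eps -> exists N : nat, / 2 ^ N < eps.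
Proof.
  intros Heps.
  assert (Hpow : forall n, INR n < 2 ^ n).
  { induction n as [|n IH]; [simpl; lra|].
    rewrite S_INR; simpl; pose proof (pow_R1_Rle 2 n ltac:(lra)); lra. }
  destruct (INR_unbounded (/ eps)) as [N HN]; exists N; specialize (Hpow N).
  rewrite <- (Rinv_inv eps); apply Rinv_lt_contravar.
  - apply Rmult_lt_0_compat; [apply Rinv_0_lt_compat | apply pow_lt]; lra.
  - lra.
Qed.

Lemma rational_threshold_between lo hi : 0 <= lo -> lo < hi ->
  exists N p K : nat, (0 < K)%nat /\
    lo < INR p / INR K - / 2 ^ N /\ INR p / INR K + / 2 ^ N < hi.
Proof.
  intros Hlo Hlt; destruct (pow2_inv_lt ((hi - lo) / 4)) as [N HN]; [lra|].
  set (mid := (lo + hi) / 2).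
  assert (Hpow : 0 < 2 ^ N) by (apply pow_lt; lra).
  destruct (nfloor_ex (mid * 2 ^ N)) as [p Hp]; [unfold mid; nra|].
  exists N, p, (2 ^ N)%nat; split; [apply Nat.neq_0_lt_0, Nat.pow_nonzero; lia|].
  rewrite pow_INR; change (INR 2) with 2.
  assert (Hq : mid - / 2 ^ N < INR p / 2 ^ N <= mid).
  { split; [apply Rlt_div_r | apply Rle_div_l]; try lra.
    replace ((mid - / 2 ^ N) * 2 ^ N) with (mid * 2 ^ N - 1) by (field; lra); lra. }
  unfold mid in *; lra.
Qed.

Lemma random_min_le_liminf_upper (phi : forecasting_system) (w : path) (I : interval) :
  computable_fs phi -> temporal phi -> wCH_random phi w -> wCH_random (const_fs I) w ->
  Rbar_le (imin I) (LimInf_seq (fun n => upper phi (prefix w n))).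
Proof.
  intros Hc Ht Hphi HI; apply NNPP; intro Hgt.
  destruct (LimInf_seq_lt_frequently _ _ Hgt) as (r & Hr & Hfreq).
  assert (Hr0 : 0 <= r).
  { destruct (Hfreq 0%nat) as (n & _ & Hn); unfold upper in Hn.
    destruct (phi (prefix w n)); simpl in Hn; lra. }
  destruct (rational_threshold_between r (imin I) Hr0 Hr) as (N & p & K & HK & Hlo & Hhi).
  destruct (threshold_selection (upper phi) N p K HK (approximable_upper phi Hc)
              (length_invariant_upper phi Ht)) as (S & HSt & HSr & HS).
  assert (Hoften : selected_often S w).
  { intro N0; destruct (Hfreq N0) as (n & Hn & Hup); exists n; split; [exact Hn|].
    destruct (S (prefix w n)) eqn:E; [reflexivity|].
    pose proof (proj2 (HS _) E); lra. }
  assert (imin I <= INR p / INR K + / 2 ^ N); [|lra].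
  apply (selected_lower_le_upper (const_fs I) phi S w); auto.
  - intros k _; apply Rle_refl.
  - intros k Hk; apply Rlt_le, (proj1 (HS _) Hk).
Qed.

Lemma limsup_lower_le_random_max (phi : forecasting_system) (w : path) (I : interval) :
  computable_fs phi -> temporal phi -> wCH_random phi w -> wCH_random (const_fs I) w ->
  Rbar_le (LimSup_seq (fun n => lower phi (prefix w n))) (imax I).
Proof.
  intros Hc Ht Hphi HI; apply NNPP; intro Hgt.
  destruct (LimSup_seq_gt_frequently _ _ Hgt) as (r & Hr & Hfreq).
  assert (Hmax0 : 0 <= imax I) by (destruct I; simpl; lra).
  destruct (rational_threshold_between (imax I) r Hmax0 Hr) as (N & p & K & HK & Hlo & Hhi).
  destruct (threshold_selection (lower phi) N p K HK (approximable_lower phi Hc)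
              (length_invariant_lower phi Ht)) as (S & HSt & HSr & HS).
  destruct (negb_selection S HSt HSr) as [HnSt HnSr].
  assert (Hoften : selected_often (fun s => negb (S s)) w).
  { intro N0; destruct (Hfreq N0) as (n & Hn & Hlow); exists n; split; [exact Hn|].
    destruct (S (prefix w n)) eqn:E; [|reflexivity].
    pose proof (proj1 (HS _) E); lra. }
  assert (INR p / INR K - / 2 ^ N <= imax I); [|lra].
  apply (selected_lower_le_upper phi (const_fs I) (fun s => negb (S s)) w); auto.
  - intros k Hk; apply Rlt_le, (proj2 (HS _)).
    destruct (S (prefix w k)); [discriminate Hk | reflexivity].
  - intros k _; apply Rle_refl.
Qed.

Theorem proposition15 (phi : forecasting_system) (w : path) :
  computable_fs phi -> temporal phi -> wCH_random phi w ->
  (exists m, is_min_of (IwCH w) m /\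
     Rbar_le (Finite m) (LimInf_seq (fun n => upper phi (prefix w n)))) /\
  (exists M, is_max_of (IwCH w) M /\
     Rbar_le (LimSup_seq (fun n => lower phi (prefix w n))) (Finite M)).
Proof.
  intros Hc Ht Hphi.
  set (F := fun I => wCH_random (const_fs I) w).
  assert (Hne : exists I, F I) by (exists unit_interval; apply unit_interval_random).
  assert (Hover : forall I J, F I -> F J -> imin I <= imax J)
    by (intros I J; apply random_intervals_overlap).
  split.
  - destruct (interval_inter_min F imin imax Hne Hover) as (m & Hmin & Happrox).
    exists m; split; [exact Hmin|].
    apply Rbar_le_of_approx_below; intros r Hr.
    destruct (Happrox r Hr) as (I & HI & HrI).
    exists (imin I); split; [exact HrI | apply random_min_le_liminf_upper; auto].
  - destruct (interval_inter_max F imin imax Hne Hover) as (M & Hmax & Happrox).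
    exists M; split; [exact Hmax|].
    apply Rbar_le_of_approx_above; intros r Hr.
    destruct (Happrox r Hr) as (I & HI & HIr).
    exists (imax I); split; [exact HIr | apply limsup_lower_le_random_max; auto].
Qed.
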